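(* Let $\langle I_n:n\in\omega\rangle$ be a sequence of $\sigma$-ideals on a set $X$ with $I_{n+1}\subseteq I_n$ for all $n$, and let $I=\bigcap_n I_n$. Suppose that for each $m\in\omega$ there is a Galois–Tukey morphism from $\mathbf{Cof}(I_m)$ to $\mathbf{Lc}(\omega,2^{\mathrm{id}})$. Then there is a Galois–Tukey morphism from $\mathbf{Cof}(I)$ to $\mathbf{Lc}(\omega,2^{\mathrm{id}})$.
   Context: A relational system is a triple $(A,B,R)$ with $R\subseteq A\times B$. A Galois–Tukey morphism from $(A,B,R)$ to $(A',B',S)$ is a pair $(\varphi,\psi)$ with $\varphi\colon A\to A'$, $\psi\colon B'\to B$ such that for all $x\in A$, $y\in B'$: $\varphi(x)\,S\,y$ implies $x\,R\,\psi(y)$. For an ideal $J$, $\mathbf{Cof}(J)=(J,J,\subseteq)$. $\mathbf{Lc}(\omega,2^{\mathrm{id}})=(\omega^\omega,S,\in^* )$ where $S=\prod_{n\in\omega}[\omega]^{\le 2^n}$ is the set of sequences $\phi$ with $\phi(n)\subseteq\omega$, $|\phi(n)|\le2^n$, and $x\in^*\phi$ iff $x(n)\in\phi(n)$ for all but finitely many $n$. *)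

From Stdlib Require Import List Arith.
Import ListNotations.

Definition subset {X : Type} (A B : X -> Prop) : Prop := forall x, A x -> B x.

Definition sigma_ideal {X : Type} (J : (X -> Prop) -> Prop) : Prop :=
  J (fun _ => False) /\
  (forall A B : X -> Prop, J B -> subset A B -> J A) /\
  (forall F : nat -> (X -> Prop), (forall n, J (F n)) ->
     J (fun x => exists n, F n x)).

Record relsys := RelSys { rs_A : Type; rs_B : Type; rs_R : rs_A -> rs_B -> Prop }.

Definition GT_morphism (P Q : relsys) : Prop :=
  exists (phi : rs_A P -> rs_A Q) (psi : rs_B Q -> rs_B P),
    forall (x : rs_A P) (y : rs_B Q), rs_R Q (phi x) y -> rs_R P x (psi y).

Definition Cof {X : Type} (J : (X -> Prop) -> Prop) : relsys :=
  @RelSys {A : X -> Prop | J A} {A : X -> Prop | J A}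
    (fun a b => subset (proj1_sig a) (proj1_sig b)).

(* S = prod_n [omega]^{<= 2^n}: each phi(n) is a finite subset of omega of
   size <= 2^n, represented as (the elements of) a list of length <= 2^n. *)
Definition slalom := {phi : nat -> list nat | forall n, length (phi n) <= 2 ^ n}.

Definition in_star (x : nat -> nat) (phi : slalom) : Prop :=
  exists N, forall n, N <= n -> In (x n) (proj1_sig phi n).

Definition Lc_omega_2id : relsys := @RelSys (nat -> nat) slalom in_star.

(* A single real [code f] can carry a whole sequence of reals [f 0, f 1, ...]:
   its value at [n] is a Cantor code of the tuple [(f 0 n, ..., f n n)].
   Decoding the [m]-th coordinate of every entry of a slalom that localizes
   [code f] yields a slalom localizing [f m].  So with [phi] sending [A] to
   the code of the [phi_m A], and [psi] sending a slalom [s] to the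
   intersection over [m] of the [psi_m] of the decoded slaloms, every
   [psi s] lies below each [psi_m (...)], hence in every [I_m]. *)

From Stdlib Require Import List Arith.
From Stdlib Require Import Cantor IndefiniteDescription Lia.
Import ListNotations.

Fixpoint encode_list (l : list nat) : nat :=
  match l with [] => 0 | a :: l' => Cantor.to_nat (a, encode_list l') end.

Fixpoint decode_nth (m c : nat) : nat :=
  match m with
  | 0 => fst (Cantor.of_nat c)
  | S m' => decode_nth m' (snd (Cantor.of_nat c))
  end.

Lemma decode_nth_encode_list l m :
  m < length l -> decode_nth m (encode_list l) = nth m l 0.
Proof.
  revert m; induction l as [|a l IH]; intros m Hm; [simpl in Hm; lia|].
  change (encode_list (a :: l)) with (Cantor.to_nat (a, encode_list l)).
  destruct m; cbn [decode_nth]; rewrite Cantor.cancel_of_to; cbn [fst snd nth]; auto.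
  apply IH; simpl in Hm; lia.
Qed.

Definition diagonal_code (f : nat -> nat -> nat) (n : nat) : nat :=
  encode_list (map (fun m => f m n) (seq 0 (S n))).

Lemma decode_nth_diagonal_code f m n :
  m <= n -> decode_nth m (diagonal_code f n) = f m n.
Proof.
  intro Hmn; unfold diagonal_code.
  assert (Hlen : m < length (map (fun m => f m n) (seq 0 (S n))))
    by (rewrite length_map, length_seq; lia).
  rewrite decode_nth_encode_list by exact Hlen.
  rewrite nth_indep with (d' := f 0 n) by exact Hlen.
  rewrite (map_nth (fun m => f m n)), seq_nth; [reflexivity | lia].
Qed.

(* Below [m] the entries are emptied, as [decode_nth m] is meaningless there. *)
Definition decode_slalom_fun (m : nat) (s : slalom) (n : nat) : list nat :=
  if m <=? n then map (decode_nth m) (proj1_sig s n) else [].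

Lemma decode_slalom_fun_length m s n : length (decode_slalom_fun m s n) <= 2 ^ n.
Proof.
  unfold decode_slalom_fun; destruct (m <=? n).
  - rewrite length_map; apply (proj2_sig s).
  - simpl; lia.
Qed.

Definition decode_slalom (m : nat) (s : slalom) : slalom :=
  exist _ (decode_slalom_fun m s) (decode_slalom_fun_length m s).

Lemma in_star_decode_slalom f s m :
  in_star (diagonal_code f) s -> in_star (f m) (decode_slalom m s).
Proof.
  intros [N HN]; exists (max N m); intros n Hn; simpl; unfold decode_slalom_fun.
  replace (m <=? n) with true by (symmetry; apply Nat.leb_le; lia).
  rewrite <- (decode_nth_diagonal_code f m n) by lia.
  apply in_map, HN; lia.
Qed.

Lemma GT_morphism_family_choice (I : Type) (P : I -> relsys) (Q : relsys) :
  (forall i, GT_morphism (P i) Q) ->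
  exists (phi : forall i, rs_A (P i) -> rs_A Q) (psi : forall i, rs_B Q -> rs_B (P i)),
    forall i x y, rs_R Q (phi i x) y -> rs_R (P i) x (psi i y).
Proof.
  intro Hmor.
  pose (phi_i := fun i => constructive_indefinite_description _ (Hmor i)).
  pose (psi_i := fun i => constructive_indefinite_description _ (proj2_sig (phi_i i))).
  exists (fun i => proj1_sig (phi_i i)), (fun i => proj1_sig (psi_i i)).
  intro i; exact (proj2_sig (psi_i i)).
Qed.

Lemma GT_morphism_Cof_bigcap (X : Type) (J : nat -> (X -> Prop) -> Prop) :
  (forall n (A B : X -> Prop), J n B -> subset A B -> J n A) ->
  (forall m, GT_morphism (Cof (J m)) Lc_omega_2id) ->
  GT_morphism (Cof (fun A : X -> Prop => forall n, J n A)) Lc_omega_2id.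
Proof.
  intros Hdown Hmor.
  destruct (GT_morphism_family_choice _ _ _ Hmor) as (phi & psi & Hphipsi); simpl in *.
  pose (bigcap_psi := fun (s : slalom) (x : X) =>
          forall m, proj1_sig (psi m (decode_slalom m s)) x).
  assert (Hbigcap : forall s n, J n (bigcap_psi s)).
  { intros s n; apply (Hdown n _ _ (proj2_sig (psi n (decode_slalom n s)))).
    intros x Hx; apply Hx. }
  exists (fun A : {A : X -> Prop | forall n, J n A} => diagonal_code (fun m => phi m (exist _ (proj1_sig A) (proj2_sig A m)))).
  exists (fun s => exist _ (bigcap_psi s) (Hbigcap s)).
  intros [A HA] s Hs x Hx m; simpl in *.
  apply (Hphipsi m (exist _ A (HA m)) (decode_slalom m s)); [|exact Hx].
  exact (in_star_decode_slalom (fun m => phi m (exist _ A (HA m))) s m Hs).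
Qed.

Theorem theorem4p4 (X : Type) (In_ : nat -> (X -> Prop) -> Prop) :
  (forall n, sigma_ideal (In_ n)) ->
  (forall n (A : X -> Prop), In_ (S n) A -> In_ n A) ->
  (forall m, GT_morphism (Cof (In_ m)) Lc_omega_2id) ->
  GT_morphism (Cof (fun A : X -> Prop => forall n, In_ n A)) Lc_omega_2id.
Proof.
  intros Hideal _ Hmor.
  apply GT_morphism_Cof_bigcap; [|exact Hmor].
  intro n; apply (Hideal n).
Qed.
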